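(* Let $(P_n)_{n\ge0}$ be the monic polynomials defined by $P_{-1}=0$, $P_0=1$, $xP_n=P_{n+1}+C_nP_{n-1}$, with $C_n=\tfrac14(1-(-1)^nq^{n/2})(1-(-1)^nq^{(n-1)/2})$ for every integer $n$ (so $C_0=0$). Define $a_n=(\alpha^2-1)\gamma_n$, $b_n=-\tfrac12\big(1-(-1)^nq^{n/2}\big)\big((-1)^n-q^{-(n-1)/2}\big)$, $c_n=b_{n+1}C_n-\alpha b_nC_{n-1}-(\alpha^2-1)\gamma_nC_n$, $d_n=(b_{n-1}C_n-\alpha b_nC_{n-1})C_{n-2}$. Then for all $n\ge1$, with the convention $P_j=0$ for $j<0$, $$\mathcal S_qP_n=\alpha_nP_n+b_nC_{n-1}P_{n-2},\qquad U_2\,\mathcal D_qP_n=a_nP_{n+1}+c_nP_{n-1}+d_nP_{n-3}.$$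
   Context: Fix $0<q<1$. With $x(s)=(q^s+q^{-s})/2$, for a complex polynomial $f$: $\mathcal D_qf(x(s))=\frac{f(x(s+1/2))-f(x(s-1/2))}{x(s+1/2)-x(s-1/2)}$, $\mathcal S_qf(x(s))=\frac{f(x(s+1/2))+f(x(s-1/2))}{2}$ (both polynomials). $\alpha=(q^{1/2}+q^{-1/2})/2$, $\alpha_n=(q^{n/2}+q^{-n/2})/2$, $\gamma_n=(q^{n/2}-q^{-n/2})/(q^{1/2}-q^{-1/2})$, $U_2(x)=(\alpha^2-1)(x^2-1)$. *)

From HB Require Import structures.
From mathcomp Require Import all_boot all_order all_algebra.
From mathcomp Require Import reals exp.
Set Implicit Arguments. Unset Strict Implicit. Unset Printing Implicit Defensive.
Import Order.TTheory GRing.Theory Num.Theory.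
Local Open Scope ring_scope.

Section Defs.
Variable R : realType.
Variable q : R.

Definition qp (r : R) : R := q `^ r.
Definition sgn (n : int) : R := (-1) ^ n.

Definition xs (s : R) : R := (qp s + qp (- s)) / 2.

Definition Sq_at (f : {poly R}) (s : R) : R :=
  (f.[xs (s + 1/2)] + f.[xs (s - 1/2)]) / 2.
Definition Dq_at (f : {poly R}) (s : R) : R :=
  (f.[xs (s + 1/2)] - f.[xs (s - 1/2)]) / (xs (s + 1/2) - xs (s - 1/2)).

Definition alpha : R := (qp (1/2) + qp (-(1/2))) / 2.
Definition alpha_n (n : int) : R := (qp (n%:~R / 2) + qp (- (n%:~R / 2))) / 2.
Definition gamma_n (n : int) : R :=
  (qp (n%:~R / 2) - qp (- (n%:~R / 2))) / (qp (1/2) - qp (-(1/2))).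
Definition U2 (x : R) : R := (alpha ^+ 2 - 1) * (x ^+ 2 - 1).

Definition Cn (n : int) : R :=
  (1 - sgn n * qp (n%:~R / 2)) * (1 - sgn n * qp ((n%:~R - 1) / 2)) / 4.

(* (P_n, P_{n+1}) with P_0 = 1, P_1 = x (from x P_0 = P_1 + C_0 P_{-1}, P_{-1}=0),
   and P_{n+2} = x P_{n+1} - C_{n+1} P_n. *)
Fixpoint Ppair (n : nat) : {poly R} * {poly R} :=
  match n with
  | 0%N => (1, 'X)
  | k.+1 => let: (a, b) := Ppair k in (b, 'X * b - (Cn (k.+1)%:Z) *: a)
  end.
Definition P (n : nat) : {poly R} := (Ppair n).1.
Definition Pz (j : int) : {poly R} :=
  match j with Posz k => P k | Negz _ => 0 end.

Definition an (n : int) : R := (alpha ^+ 2 - 1) * gamma_n n.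
Definition bn (n : int) : R :=
  - (1 - sgn n * qp (n%:~R / 2)) * (sgn n - qp (- ((n%:~R - 1) / 2))) / 2.
Definition cn (n : int) : R :=
  bn (n + 1) * Cn n - alpha * bn n * Cn (n - 1) - (alpha ^+ 2 - 1) * gamma_n n * Cn n.
Definition dn (n : int) : R :=
  (bn (n - 1) * Cn n - alpha * bn n * Cn (n - 1)) * Cn (n - 2).
End Defs.

From Pilot Require Import Defs.
From HB Require Import structures.
From mathcomp Require Import all_boot all_order all_algebra.
From mathcomp Require Import reals exp.
From mathcomp Require Import ring zify.
Import Order.TTheory GRing.Theory Num.Theory.
Local Open Scope ring_scope.
Set Implicit Arguments. Unset Strict Implicit.

(* Fix s and write  a = x(s+1/2),  b = x(s-1/2),  x = x(s).  Then
   (a + b)/2 = alpha x  and  ((a - b)/2)^2 = (alpha^2 - 1)(x^2 - 1) = U_2(x),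
   so for a polynomial f the two quantities
     M f = (f(a) + f(b))/2                 (= S_q f (x(s)))
     T f = (a - b)/2 * (f(a) - f(b))/2     (= U_2(x) D_q f (x(s)))
   obey  M (X f) = alpha x M f + T f  and  T (X f) = alpha x T f + U_2(x) M f.
   Feeding the three-term recurrence X P_m = P_{m+1} + C_m P_{m-1} through
   these rules expresses M P_{m+1} and T P_{m+1} through the formulas at m and
   m - 1; the result has the claimed shape because the coefficients
   alpha_n, a_n, b_n, c_n, d_n satisfy a handful of contiguous relations. *)

Section Coefficients.
Variable R : realType.
Variable q : R.
Hypothesis q_gt0 : 0 < q.
Hypothesis q_neq1 : q != 1.

Local Notation qp := (qp q).
Local Notation t := (qp (1/2)).
Local Notation sg := (@sgn R).

Definition qh (i : int) : R := qp (i%:~R / 2).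

Lemma qpD r u : qp (r + u) = qp r * qp u.
Proof. by rewrite /Defs.qp powRD // (gt_eqF q_gt0) implybT. Qed.

Lemma qpN r : qp (- r) = (qp r)^-1.
Proof. exact: powRN. Qed.

Lemma qp_neq0 r : qp r != 0.
Proof. by rewrite gt_eqF // powR_gt0. Qed.

Lemma sqrtq_sqr : t * t = q.
Proof.
rewrite -qpD (_ : 1/2 + 1/2 = 1); last by field.
by rewrite /Defs.qp powRr1 // ltW.
Qed.

(* Since q <> 1, the quantities t^2 - 1 and t - 1/t vanish nowhere;
   they are the denominators appearing in gamma_n. *)
Lemma sqrtq_sqr_sub1_neq0 : t * t - 1 != 0.
Proof. by rewrite sqrtq_sqr subr_eq0. Qed.

Lemma sqrtq_gap_neq0 : t - t^-1 != 0.
Proof.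
have -> : t - t^-1 = (t * t - 1) / t by field; rewrite qp_neq0.
by rewrite mulf_neq0 ?invr_eq0 ?qp_neq0 ?sqrtq_sqr_sub1_neq0.
Qed.

Lemma qh0 : qh 0 = 1. Proof. by rewrite /qh mul0r /Defs.qp powRr0. Qed.

Lemma qh_succ i : qh (i + 1) = qh i * t.
Proof. by rewrite /qh -qpD intrD mulrDl mul1r. Qed.

Lemma qh1 : qh 1 = t. Proof. by rewrite -[1]add0r qh_succ qh0 mul1r. Qed.

Lemma qp_pred_half i : qp ((i%:~R - 1) / 2) = qh i / t.
Proof. by rewrite /qh mulrBl mul1r qpD qpN. Qed.

Lemma qh_pred i : qh (i - 1) = qh i / t.
Proof. by rewrite /qh intrB qp_pred_half. Qed.

Lemma qh_pred2 i : qh (i - 2) = qh i / t / t.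
Proof. by rewrite (_ : i - 2 = i - 1 - 1) ?qh_pred //; ring. Qed.

Lemma qh_pred3 i : qh (i - 3) = qh i / t / t / t.
Proof. by rewrite (_ : i - 3 = i - 2 - 1) ?qh_pred ?qh_pred2 //; ring. Qed.

Lemma sgn0 : sg 0 = 1. Proof. by rewrite /sgn expr0z. Qed.

Lemma sgn_succ i : sg (i + 1) = - sg i.
Proof. by rewrite /sgn expfzDr ?oppr_eq0 ?oner_eq0 // expr1z mulrN1. Qed.

Lemma sgn1 : sg 1 = -1. Proof. by rewrite -[1]add0r sgn_succ sgn0. Qed.

Lemma sgn_pred i : sg (i - 1) = - sg i.
Proof. by rewrite -{2}(subrK 1 i) sgn_succ opprK. Qed.

Lemma sgn_pred2 i : sg (i - 2) = sg i.
Proof. by rewrite (_ : i - 2 = i - 1 - 1) ?sgn_pred ?opprK //; ring. Qed.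

Lemma sgn_pred3 i : sg (i - 3) = - sg i.
Proof. by rewrite (_ : i - 3 = i - 2 - 1) ?sgn_pred ?sgn_pred2 //; ring. Qed.

(* The contiguous relations below only hold because (-1)^n is a sign. *)
Lemma sgn_pm i : sg i = 1 \/ sg i = -1.
Proof.
rewrite /sgn; case: i => n; rewrite [_ ^ _]/(exprz _ _) -signr_odd.
  by case: (odd n); [right | left].
by case: (odd n.+1); [right | left]; rewrite ?invrN ?invr1.
Qed.

Lemma alpha_cf : alpha q = (t + t^-1) / 2.
Proof. by rewrite /alpha qpN. Qed.

Lemma alpha_n_cf i : alpha_n q i = (qh i + (qh i)^-1) / 2.
Proof. by rewrite /alpha_n qpN. Qed.

Lemma gamma_n_cf i : gamma_n q i = (qh i - (qh i)^-1) / (t - t^-1).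
Proof. by rewrite /gamma_n !qpN. Qed.

Lemma Cn_cf i : Cn q i = (1 - sg i * qh i) * (1 - sg i * (qh i / t)) / 4.
Proof. by rewrite /Cn qp_pred_half. Qed.

Lemma bn_cf i : bn q i = - (1 - sg i * qh i) * (sg i - t / qh i) / 2.
Proof. by rewrite /bn qpN qp_pred_half invf_div. Qed.

Local Ltac closed_form :=
  rewrite /an /cn /dn ?alpha_cf ?alpha_n_cf ?gamma_n_cf ?Cn_cf ?bn_cf
    ?(sgn_succ, sgn_pred, sgn_pred2, sgn_pred3, qh_succ, qh_pred, qh_pred2, qh_pred3).

Local Ltac rational_identity i :=
  try (case: (sgn_pm i) => ->); field;
  by rewrite ?qp_neq0 ?sqrtq_gap_neq0 ?sqrtq_sqr_sub1_neq0 ?pnatr_eq0.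

(* C_0 = 0: the recurrence needs no P_{-1} term. *)
Lemma Cn0 : Cn q 0 = 0.
Proof. by rewrite /Cn -/(qh 0) qh0 sgn0 mul1r subrr !mul0r. Qed.

Local Notation A := (alpha q ^+ 2 - 1).

Lemma alpha_n_succ i : alpha_n q (i + 1) = alpha q * alpha_n q i + an q i.
Proof. closed_form; rational_identity i. Qed.

Lemma alpha_n_pred i : alpha_n q (i - 1) = alpha q * alpha_n q i - an q i.
Proof. closed_form; rational_identity i. Qed.

Lemma an_succ i : an q (i + 1) = alpha q * an q i + A * alpha_n q i.
Proof. closed_form; rational_identity i. Qed.

Lemma cn_succ i : cn q (i + 1) = alpha q * an q i * Cn q (i + 1) + alpha q * cn q i
  + A * alpha_n q i * (Cn q (i + 1) + Cn q i - 1) + A * bn q i * Cn q (i - 1)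
  - Cn q i * an q (i - 1).
Proof. closed_form; rational_identity i. Qed.

Lemma dn_succ i : dn q (i + 1) = alpha q * cn q i * Cn q (i - 1) + alpha q * dn q i
  + A * alpha_n q i * Cn q i * Cn q (i - 1)
  + A * bn q i * Cn q (i - 1) * (Cn q (i - 1) + Cn q (i - 2) - 1)
  - Cn q i * cn q (i - 1).
Proof. closed_form; rational_identity i. Qed.

(* The coefficient of P_{i-4}, which would spoil the shape, cancels. *)
Lemma Pm4_coef_vanishes i :
  alpha q * dn q i * Cn q (i - 3) + A * bn q i * Cn q (i - 1) * Cn q (i - 2) * Cn q (i - 3)
  - Cn q i * dn q (i - 1) = 0.
Proof. closed_form; rational_identity i. Qed.

(* The case n = 1 of the second formula: a_1 P_2 + c_1 P_0 = U_2. *)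
Lemma an1_cn1 x : an q 1 * (x * x - Cn q 1) + cn q 1 = A * (x ^+ 2 - 1).
Proof.
closed_form; rewrite sgn1 qh1; field.
by rewrite qp_neq0 sqrtq_sqr_sub1_neq0.
Qed.

Lemma xs_mean s : (xs q (s + 1/2) + xs q (s - 1/2)) / 2 = alpha q * xs q s.
Proof.
rewrite /xs alpha_cf !qpN !qpD !qpN; field.
by rewrite !qp_neq0.
Qed.

Lemma xs_gap s : ((xs q (s + 1/2) - xs q (s - 1/2)) / 2) ^+ 2 = A * (xs q s ^+ 2 - 1).
Proof.
rewrite /xs alpha_cf !qpN !qpD !qpN; field.
by rewrite !qp_neq0.
Qed.

End Coefficients.

Section Recurrence.
Variable R : realType.
Variable q : R.

Lemma P_rec n : P q n.+2 = 'X * P q n.+1 - Cn q n.+1 *: P q n.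
Proof. by rewrite /P /=; case: (Ppair q n). Qed.

Lemma Pz_neg j : j < 0 -> Pz q j = 0.
Proof. by case: j. Qed.

Lemma Pz_rec (m : int) : 0 <= m -> Pz q (m + 1) = 'X * Pz q m - Cn q m *: Pz q (m - 1).
Proof.
case: m => // k _; case: k => [|k].
  by rewrite (_ : Posz 0 - 1 = Negz 0) //= scaler0 subr0 mulr1.
rewrite (_ : Posz k.+1 + 1 = Posz k.+2); last by lia.
rewrite (_ : Posz k.+1 - 1 = Posz k); last by lia.
exact: P_rec.
Qed.

Definition pval (x : R) (j : int) : R := (Pz q j).[x].

Lemma pval_rec x j : 0 <= j -> x * pval x j = pval x (j + 1) + Cn q j * pval x (j - 1).
Proof. by move=> j_ge0; rewrite /pval Pz_rec // !hornerE; ring. Qed.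

(* Weighted by C_{j+1}, the recurrence holds for every integer j:
   for j = -1 the weight C_0 is zero, below that both sides vanish. *)
Lemma pval_rec_weighted x j :
  Cn q (j + 1) * (x * pval x j) = Cn q (j + 1) * (pval x (j + 1) + Cn q j * pval x (j - 1)).
Proof.
have [j_ge0 | j_lt0] := lerP 0 j; first by rewrite pval_rec.
have [-> | j_neqN1] := eqVneq j (-1); first by rewrite (_ : -1 + 1 = 0) // Cn0 !mul0r.
by rewrite /pval !Pz_neg ?horner0 ?(mulr0, addr0) //; lia.
Qed.

End Recurrence.

(* The inductive step for the mean M, as an identity in any commutative ring:
   u_k stands for P_{m+k}(x), the hypotheses are the recurrences used and the
   contiguous relations for alpha_n, c_m, d_m; the left side is
   alpha x M P_m + T P_m - C_m M P_{m-1}. *)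
Lemma mean_step_identity (F : comPzRingType)
    (al x am a am1 am_1 bm bm1 bm_1 C0 Cm1 Cm2 c d u1 u0 um1 um2 um3 : F) :
  x * u0 = u1 + C0 * um1 -> Cm1 * (x * um2) = Cm1 * (um1 + Cm2 * um3) ->
  am1 = al * am + a -> am_1 = al * am - a ->
  c = bm1 * C0 - al * bm * Cm1 - a * C0 -> d = (bm_1 * C0 - al * bm * Cm1) * Cm2 ->
  al * x * (am * u0 + bm * Cm1 * um2) + (a * u1 + c * um1 + d * um3)
    - C0 * (am_1 * um1 + bm_1 * Cm2 * um3)
  = am1 * u1 + bm1 * C0 * um1.
Proof.
move=> rec0 rec2 -> -> -> ->; apply/eqP; rewrite -subr_eq0; apply/eqP.
transitivity (al * am * (x * u0 - (u1 + C0 * um1))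
              + al * bm * (Cm1 * (x * um2) - Cm1 * (um1 + Cm2 * um3))); first by ring.
by rewrite rec0 rec2 !subrr !mulr0 addr0.
Qed.

(* The inductive step for T, in the same setting; the left side is
   alpha x T P_m + U_2(x) M P_m - C_m T P_{m-1}. *)
Lemma diff_step_identity (F : comPzRingType)
    (al A x a c d a1 c1 d1 am bm a_1 c_1 d_1 Cp1 C0 Cm1 Cm2 Cm3
     u2 u1 u0 um1 um2 um3 um4 : F) :
  x * u0 = u1 + C0 * um1 -> x * u1 = u2 + Cp1 * u0 -> x * um1 = u0 + Cm1 * um2 ->
  d * (x * um3) = d * (um2 + Cm3 * um4) -> Cm1 * (x * um2) = Cm1 * (um1 + Cm2 * um3) ->
  Cm2 * (x * um3) = Cm2 * (um2 + Cm3 * um4) ->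
  a1 = al * a + A * am ->
  c1 = al * a * Cp1 + al * c + A * am * (Cp1 + C0 - 1) + A * bm * Cm1 - C0 * a_1 ->
  d1 = al * c * Cm1 + al * d + A * am * C0 * Cm1 + A * bm * Cm1 * (Cm1 + Cm2 - 1) - C0 * c_1 ->
  al * d * Cm3 + A * bm * Cm1 * Cm2 * Cm3 - C0 * d_1 = 0 ->
  al * x * (a * u1 + c * um1 + d * um3) + A * (x ^+ 2 - 1) * (am * u0 + bm * Cm1 * um2)
    - C0 * (a_1 * u0 + c_1 * um2 + d_1 * um4)
  = a1 * u2 + c1 * u0 + d1 * um2.
Proof.
move=> rec0 rec1 recm1 rec3d rec2 rec3 -> -> -> cancel4.
apply/eqP; rewrite -subr_eq0; apply/eqP.
transitivity (al * a * (x * u1 - (u2 + Cp1 * u0)) + al * c * (x * um1 - (u0 + Cm1 * um2))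
  + al * (d * (x * um3) - d * (um2 + Cm3 * um4))
  + A * am * (x * (x * u0 - (u1 + C0 * um1)) + (x * u1 - (u2 + Cp1 * u0))
              + C0 * (x * um1 - (u0 + Cm1 * um2)))
  + A * bm * (x * (Cm1 * (x * um2) - Cm1 * (um1 + Cm2 * um3))
              + Cm1 * (x * um1 - (u0 + Cm1 * um2))
              + Cm1 * (Cm2 * (x * um3) - Cm2 * (um2 + Cm3 * um4)))
  + um4 * (al * d * Cm3 + A * bm * Cm1 * Cm2 * Cm3 - C0 * d_1)); first by ring.
by rewrite rec0 rec1 recm1 rec3d rec2 rec3 cancel4 !subrr; ring.
Qed.

Section TwoNodes.
Variable R : realType.
Variable q : R.
Hypothesis q_gt0 : 0 < q.
Hypothesis q_neq1 : q != 1.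

Local Notation A := (alpha q ^+ 2 - 1).

Variables a b x : R.
Hypothesis nodes_mean : (a + b) / 2 = alpha q * x.
Hypothesis nodes_gap : ((a - b) / 2) ^+ 2 = A * (x ^+ 2 - 1).

Definition node_mean (f : {poly R}) : R := (f.[a] + f.[b]) / 2.
Definition node_diff (f : {poly R}) : R := (a - b) / 2 * (f.[a] - f.[b]) / 2.

Lemma node_mean_mulX c f g :
  node_mean ('X * f - c *: g) = alpha q * x * node_mean f + node_diff f - c * node_mean g.
Proof. by rewrite -nodes_mean /node_mean /node_diff !(hornerD, hornerN, hornerZ, hornerM, hornerX); field. Qed.

Lemma node_diff_mulX c f g :
  node_diff ('X * f - c *: g)
  = alpha q * x * node_diff f + A * (x ^+ 2 - 1) * node_mean f - c * node_diff g.
Proof. by rewrite -nodes_mean -nodes_gap /node_mean /node_diff !(hornerD, hornerN, hornerZ, hornerM, hornerX); field. Qed.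

Local Notation p := (pval q x).

Definition node_formulas (i : int) : Prop :=
  node_mean (Pz q i) = alpha_n q i * p i + bn q i * Cn q (i - 1) * p (i - 2) /\
  node_diff (Pz q i) = an q i * p (i + 1) + cn q i * p (i - 1) + dn q i * p (i - 3).

Lemma node_formulas0 : node_formulas 0.
Proof.
split; rewrite /node_mean /node_diff /pval /= !hornerE.
  by rewrite alpha_n_cf qh0 invr1.
by rewrite /an gamma_n_cf qh0 invr1 !subrr !(mulr0, mul0r).
Qed.

Lemma node_formulas1 : node_formulas 1.
Proof.
have p1 : p 1 = x by rewrite /pval /= hornerX.
have p0 : p (1 - 1) = 1 by rewrite /pval /= hornerE.
have p2 : p (1 + 1) = x * x - Cn q 1 by rewrite -[p (1 + 1)](addrK (Cn q 1 * p (1 - 1)))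
  -pval_rec // p0 p1 mulr1.
have pm2 : p (1 - 3) = 0 by rewrite /pval Pz_neg ?horner0 //; lia.
split.
  by rewrite /node_mean /pval /= !hornerE alpha_n_cf qh1 // nodes_mean alpha_cf.
rewrite p0 p2 pm2 mulr1 mulr0 addr0 an1_cn1 // -nodes_gap /node_diff /= !hornerX.
by rewrite expr2; ring.
Qed.

Lemma node_formulas_step m :
  1 <= m -> node_formulas (m - 1) -> node_formulas m -> node_formulas (m + 1).
Proof.
move=> m_ge1 [Sprev Tprev] [Scur Tcur].
have m_ge0 : 0 <= m by lia.
have [e1 e2 e3 e4] : [/\ m - 1 - 1 = m - 2, m - 1 - 2 = m - 3, m - 1 + 1 = m
                       & m - 1 - 3 = m - 4] by split; ring.
have [f1 f2 f3 f4] : [/\ m + 1 - 1 = m, m + 1 - 2 = m - 1, m + 1 + 1 = m + 2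
                       & m + 1 - 3 = m - 2] by split; ring.
have [g1 g2 g3 g4] : [/\ m - 2 + 1 = m - 1, m - 2 - 1 = m - 3, m - 3 + 1 = m - 2
                       & m - 3 - 1 = m - 4] by split; ring.
rewrite e1 e2 e3 e4 in Sprev Tprev.
have rec_m := pval_rec q x m_ge0.
have rec_m2 := pval_rec_weighted q x (m - 2); rewrite g1 g2 in rec_m2.
have rec_m3 := pval_rec_weighted q x (m - 3); rewrite g3 g4 in rec_m3.
split.
  rewrite Pz_rec // node_mean_mulX Scur Tcur Sprev f1 f2.
  apply: mean_step_identity => //; [exact: alpha_n_succ | exact: alpha_n_pred].
rewrite Pz_rec // node_diff_mulX Tcur Scur Tprev f1 f3 f4.
apply: diff_step_identity.
- exact: rec_m.
- by rewrite pval_rec ?f3 ?f1 //; lia.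
- by rewrite pval_rec ?e3 ?e1 //; lia.
- by rewrite /dn -[LHS]mulrA -[RHS]mulrA rec_m3.
- exact: rec_m2.
- exact: rec_m3.
- exact: an_succ.
- exact: cn_succ.
- exact: dn_succ.
- exact: Pm4_coef_vanishes.
Qed.

Lemma node_formulas_nat k : node_formulas (Posz k).
Proof.
suff : node_formulas (Posz k) /\ node_formulas (Posz k.+1) by case.
elim: k => [|k [IHk IHk1]]; first by split; [exact: node_formulas0 | exact: node_formulas1].
split=> //; rewrite (_ : Posz k.+2 = Posz k.+1 + 1); last by lia.
by apply: node_formulas_step => //; rewrite (_ : Posz k.+1 - 1 = Posz k) //; lia.
Qed.

End TwoNodes.

Unset Implicit Arguments.
Theorem mainTheorem5 (R : realType) (q : R) (hq0 : 0 < q) (hq1 : q < 1)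
  (n : nat) (hn : (1 <= n)%N) :
  (forall s : R,
     Sq_at q (P q n) s =
       (alpha_n q n%:Z *: P q n + (bn q n%:Z * Cn q (n%:Z - 1)) *: Pz q (n%:Z - 2)).[xs q s])
  /\
  (forall s : R, xs q (s + 1/2) != xs q (s - 1/2) ->
     U2 q (xs q s) * Dq_at q (P q n) s =
       (an q n%:Z *: P q n.+1 + cn q n%:Z *: Pz q (n%:Z - 1)
        + dn q n%:Z *: Pz q (n%:Z - 3)).[xs q s]).
Proof.
have q_neq1 : q != 1 by rewrite lt_eqF.
have formulas s := node_formulas_nat hq0 q_neq1 (xs_mean hq0 s) (xs_gap hq0 s) n.
split=> s.
  have [mean_eq _] := formulas s.
  by rewrite /Sq_at [LHS]mean_eq /pval !(hornerD, hornerZ) mulrA.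
move=> nodes_neq; have [_ diff_eq] := formulas s.
rewrite (_ : Posz n + 1 = Posz n.+1) in diff_eq; last by lia.
rewrite !(hornerD, hornerZ) -[(P q n.+1).[_]]/(pval q (xs q s) (Posz n.+1)) -diff_eq.
rewrite /U2 -(xs_gap hq0 s) /Dq_at /node_diff.
by field; rewrite subr_eq0.
Qed.
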